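(* Let $T_1=(Q_1,\Sigma,\Delta,R_1,q_1^0)$ and $T_2=(Q_2,\Delta,\Omega,R_2,q_2^0)$ be top-down tree transducers, let $A$ be the domain automaton of $T_2$, and let $\hat{T}_1$ be the product construction of $T_1$ and $A$. Let $s\in T_\Sigma$ and let $t$ be producible by the state $q_1$ of $T_1$ on input $s$. Let $S\subseteq Q_2$ be such that $t\in\bigcap_{q\in S}\text{dom}(q)$. Then $t$ is producible by the state $(q_1,S)$ of $\hat{T}_1$ on input $s$.
   Context: A top-down tree transducer $T=(Q,\Sigma,\Delta,R,q_0)$ has finite state set $Q$, ranked input/output alphabets $\Sigma,\Delta$, initial state $q_0$, and finite rule set $R$ of rules $q(a(x_1,\dots,x_k))\to t$ with $a\in\Sigma_k$ ($\Sigma_k$ = symbols of rank $k$) and $t$ a tree over $\Delta$ whose leaves may additionally be of the form $q'(x_i)$, $q'\in Q$, $i\in[k]$; rules are used as rewrite rules in the usual way. A state $q$ produces $t$ on input $s$ if the tree $t$ over $\Delta$ is derivable from $q(s)$; $\text{dom}(q)$ is the set of inputs on which $q$ produces some tree (an empty intersection of domains is the set of all trees). For $q\in Q$, $a\in\Sigma_k$, $\text{rhs}_T(q,a)$ is the set of right-hand sides of rules with left-hand side $q(a(x_1,\dots,x_k))$; for a set $\Gamma$ of right-hand sides, $\Gamma[x_i]$ is the set of $q'\in Q$ with $q'(x_i)$ occurring in some tree of $\Gamma$. Domain automaton of $T$: the top-down tree automaton (transducer over $\Sigma$ with rules of the form $p(a(x_1,\dots,x_k))\to a(p_1(x_1),\dots,p_k(x_k))$)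 with states all subsets of $Q$, initial state $\{q_0\}$, rules $S(a(x_1,\dots,x_k))\to a(S_1(x_1),\dots,S_k(x_k))$ for every $a\in\Sigma_k$, nonempty $S=\{q_1,\dots,q_n\}\subseteq Q$ and nonempty $\Gamma_j\subseteq\text{rhs}_T(q_j,a)$ ($j\in[n]$), where $S_i=\bigcup_j\Gamma_j[x_i]$, and rules $\emptyset(a(x_1,\dots,x_k))\to a(\emptyset(x_1),\dots,\emptyset(x_k))$ for all $a$. Product construction of transducers $T=(Q,\Sigma,\Delta,R,q_0)$ and $T'=(Q',\Delta,\Omega,R',q'_0)$: the transducer with states $Q\times Q'$, input $\Sigma$, output $\Omega$, initial state $(q_0,q'_0)$, and, for every rule $q(a(x_1,\dots,x_k))\to\xi$ of $T$, every $p\in Q'$ and every tree $\zeta$ derivable from $p(\xi)$ using rules of $T'$ in which the leaves of $\xi$ of the form $q''(x_i)$ are treated as unrewritable symbols and a state $p'$ applied to such a leaf stays as $p'(q''(x_i))$, the rule $(q,p)(a(x_1,\dots,x_k))\to\zeta'$, where $\zeta'$ is obtained from $\zeta$ by replacing each $p'(q''(x_i))$ by $(q'',p')(x_i)$. *)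

From Stdlib Require Import Relations.
From Stdlib Require List.
From mathcomp Require Import all_boot.
Set Implicit Arguments.
Unset Strict Implicit.
Unset Printing Implicit Defensive.

(** Ranked trees: a node carries a label and a list of children.
    Ranks are given by separate rank functions; [wfb ar t] says that every
    node labelled [l] has exactly [ar l] children. *)
Inductive tree (L : Type) : Type := Node : L -> seq (tree L) -> tree L.
Arguments Node {L} _ _.

Fixpoint wfb (L : Type) (ar : L -> nat) (t : tree L) : bool :=
  let: Node l cs := t in (size cs == ar l) && all (wfb ar) cs.

Fixpoint tsubst (A B C : Type) (f : B -> tree (A + C)) (t : tree (A + B))
  : tree (A + C) :=
  match t with
  | Node (inl a) cs => Node (inl a) (map (tsubst f) cs)
  | Node (inr b) _ => f b
  end.

Fixpoint embed (A X : Type) (t : tree A) : tree (A + X) :=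
  let: Node a cs := t in Node (inl a) (map (@embed A X) cs).

Fixpoint leaves (A B : Type) (t : tree (A + B)) : seq B :=
  match t with
  | Node (inl _) cs => flatten (map (@leaves A B) cs)
  | Node (inr b) _ => [:: b]
  end.

(** Right-hand sides: trees over the output alphabet whose leaves may be
    [q'(x_i)], encoded as [Node (inr (q', i)) [::]].  Variables are
    0-indexed: [x_1, ..., x_k] of the paper are [0, ..., k-1]. *)
Definition rhs (Q Out : Type) := tree (Out + (Q * nat)).

(** Sentential forms: trees over the output alphabet with leaves
    [q(s)] (state applied to an input tree), encoded [Node (inr (q, s)) [::]]. *)
Definition sform (Q In Out : Type) := tree (Out + (Q * tree In)).

Definition rhs_ar (Q Out : Type) (rkOut : Out -> nat) (l : Out + (Q * nat)) : nat :=
  match l with inl o => rkOut o | inr _ => 0 end.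

(** A set of rules is given as a predicate [rule q a r] meaning that
    [q(a(x_1,...,x_k)) -> r] is a rule. *)
Definition wf_rules (Q In Out : Type) (rkIn : In -> nat) (rkOut : Out -> nat)
  (rule : Q -> In -> rhs Q Out -> Prop) : Prop :=
  forall q a r, rule q a r ->
    wfb (@rhs_ar Q Out rkOut) r && all (fun b => b.2 < rkIn a) (leaves r).

Definition rules_of (Q In Out : Type) (R : seq (Q * In * rhs Q Out))
  : Q -> In -> rhs Q Out -> Prop :=
  fun q a r => List.In (q, a, r) R.

Section Semantics.
Variables (Q In Out : Type) (rkIn : In -> nat) (rule : Q -> In -> rhs Q Out -> Prop).

Definition inst (ss : seq (tree In)) (dflt : tree In) (b : Q * nat)
  : sform Q In Out := Node (inr (b.1, nth dflt ss b.2)) [::].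

Inductive step : sform Q In Out -> sform Q In Out -> Prop :=
| step_root q a ss r :
    rule q a r -> size ss = rkIn a ->
    step (Node (inr (q, Node a ss)) [::]) (tsubst (inst ss (Node a ss)) r)
| step_ctx o l1 u u' l2 :
    step u u' ->
    step (Node (inl o) (l1 ++ u :: l2)) (Node (inl o) (l1 ++ u' :: l2)).

Definition derives := clos_refl_trans _ step.

Definition produces (q : Q) (s : tree In) (t : tree Out) : Prop :=
  derives (Node (inr (q, s)) [::]) (embed _ t).

End Semantics.

Definition domain_rules (Q : finType) (In Out : Type) (rkIn : In -> nat)
  (rule : Q -> In -> rhs Q Out -> Prop)
  : {set Q} -> In -> rhs {set Q} In -> Prop :=
  fun S a r =>
    (S = set0 /\
       r = Node (inl a) [seq Node (inr (set0, i)) [::] | i <- iota 0 (rkIn a)])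
    \/
    (S != set0 /\
     exists (Gamma : Q -> seq (rhs Q Out)) (Si : nat -> {set Q}),
       (forall q, q \in S -> Gamma q <> [::] /\
                              forall g, List.In g (Gamma q) -> rule q a g) /\
       (forall i q', q' \in Si i <->
          exists q, q \in S /\ exists g, List.In g (Gamma q) /\ (q', i) \in leaves g) /\
       r = Node (inl a) [seq Node (inr (Si i, i)) [::] | i <- iota 0 (rkIn a)]).

(** Product construction of [T] (states [Q], [In -> Mid]) and [T']
    (states [Q'], [Mid -> Out]).  [T'] is run on a right-hand side [xi] of [T],
    i.e. on a tree over [Mid + (Q * nat)] whose extra leaves [q''(x_i)]
    have rank 0 and no rules (unrewritable). *)
Definition ext_rank (Q Mid : Type) (rkMid : Mid -> nat) (l : Mid + (Q * nat)) : nat :=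
  match l with inl m => rkMid m | inr _ => 0 end.

Definition ext_rules (Q Q' Mid Out : Type) (rule2 : Q' -> Mid -> rhs Q' Out -> Prop)
  : Q' -> Mid + (Q * nat) -> rhs Q' Out -> Prop :=
  fun p l r => match l with inl m => rule2 p m r | inr _ => False end.

(** [unconv z'] is the tree [zeta] obtained from [z'] by replacing each
    [(q'',p')(x_i)] by [p'(q''(x_i))]; so "[z'] is obtained from [zeta]" is
    [zeta = unconv z']. *)
Definition unconv (Q Q' Mid Out : Type) (z : rhs (Q * Q') Out)
  : sform Q' (Mid + (Q * nat)) Out :=
  tsubst (fun b : (Q * Q') * nat =>
            Node (inr (b.1.2, Node (inr (b.1.1, b.2)) [::])) [::]) z.

Definition product_rules (Q Q' In Mid Out : Type) (rkMid : Mid -> nat)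
  (rule1 : Q -> In -> rhs Q Mid -> Prop) (rule2 : Q' -> Mid -> rhs Q' Out -> Prop)
  : Q * Q' -> In -> rhs (Q * Q') Out -> Prop :=
  fun qp a z' =>
    exists xi, rule1 qp.1 a xi /\
      derives (@ext_rank Q Mid rkMid) (@ext_rules Q Q' Mid Out rule2)
        (Node (inr (qp.2, xi)) [::]) (@unconv Q Q' Mid Out z').

From mathcomp Require Import all_boot.
From Stdlib Require Import Relations.
From Stdlib Require List.
Import List (Forall2, Forall2(..)).

(* Induction on the input s = a(s_1, ..., s_k).  A derivation of t from
   q1(s) starts with a rule q1(a(x_1, ..., x_k)) -> xi of T1 and then splits
   along the output nodes of xi.  At an output node d, where
   t = d(t_1, ..., t_m) lies in the domain of every q in S, choosing for each
   such q one rule of T2 that leads to an output yields a rule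
   S(d(x_1, ..., x_m)) -> d(S_1(x_1), ..., S_m(x_m)) of the domain automaton
   with t_j in the domain of every state of S_j.  Running the automaton on xi
   in this way reaches every leaf q''(x_i) of xi in a state S'' whose domains
   all contain the subtree t' derived from q''(s_i), and the induction
   hypothesis for s_i gives (q'', S'')(s_i) =>* t'.  The tree produced by the
   automaton on xi is therefore the right-hand side of a product rule for
   (q1, S) that derives t. *)

#[local] Arguments rt_trans {A R x y z}.

Definition tree_nested_ind (L : Type) (P : tree L -> Prop)
  (IH : forall l cs, (forall c, List.In c cs -> P c) -> P (Node l cs)) :
  forall t, P t :=
  fix F t := let: Node l cs := t in IH l cs
   ((fix G (cs : seq (tree L)) : forall c, List.In c cs -> P c :=
      match cs return forall c, List.In c cs -> P c with
      | [::] => fun c (h : List.In c [::]) => False_ind _ h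
      | c0 :: cs' => fun c h => match h with
           | or_introl e => eq_ind c0 P (F c0) c e
           | or_intror h' => G cs' c h' end end) cs).

Lemma In_nth {T : Type} (x0 : T) {s : seq T} {i} : i < size s -> List.In (nth x0 s i) s.
Proof. by elim: s i => [|x s IHs] [|i] //= lt_i_s; [left | right; apply: IHs]. Qed.

Lemma Forall2_nthP {A B : Type} {R : A -> B -> Prop} (a : A) (b : B) {s1 s2} :
  Forall2 R s1 s2 <->
  size s1 = size s2 /\ forall i, i < size s1 -> R (nth a s1 i) (nth b s2 i).
Proof.
split.
- elim=> [|x y s1' s2' Rxy _ [eq_sz IHR]] //=.
  by split=> [|[|i] lt_i] //=; [rewrite eq_sz | apply: IHR].
- elim: s1 s2 => [|x s1 IHs] [|y s2] /= [eq_sz Rnth] //; constructor.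
  + exact: (Rnth 0).
  + by apply: IHs; split=> [|i lt_i]; [case: eq_sz | apply: (Rnth i.+1)].
Qed.

Lemma all_flatten {T : Type} (p : pred T) (ss : seq (seq T)) :
  all p (flatten ss) = all (all p) ss.
Proof. by elim: ss => //= s ss IHss; rewrite all_cat IHss. Qed.

Lemma mem_flatten_map (T : Type) (B : eqType) (f : T -> seq B) (cs : seq T) b :
  b \in flatten (map f cs) -> exists2 c, List.In c cs & b \in f c.
Proof.
elim: cs => [|c cs IHcs] //=; rewrite mem_cat => /orP[b_in | /IHcs[c' c'_in b_in]].
- by exists c; first left.
- by exists c'; first right.
Qed.

Lemma Forall2_In_l {A B : Type} {R : A -> B -> Prop} {s1 s2 x} :
  Forall2 R s1 s2 -> List.In x s1 -> exists2 y, List.In y s2 & R x y.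
Proof.
elim=> [|x' y s1' s2' Rxy _ IHR] //= [<-|/IHR [z z_in Rxz]].
- by exists y; first left.
- by exists z; first right.
Qed.

Lemma seq_choice {T : Type} (z0 : T) {P : nat -> T -> Prop} {n} :
  (forall i, i < n -> exists z, P i z) ->
  exists2 zs, size zs = n & forall i, i < n -> P i (nth z0 zs i).
Proof.
elim: n => [|n IHn] exP; first by exists [::].
have [|zs sz_zs Pzs] := IHn; first by move=> i /ltnW; apply: exP.
have [z Pz] := exP n (ltnSn n).
exists (rcons zs z); first by rewrite size_rcons sz_zs.
move=> i; rewrite ltnS leq_eqVlt nth_rcons sz_zs => /orP[/eqP->|lt_i_n].
- by rewrite ltnn eqxx.
- by rewrite lt_i_n; apply: Pzs.
Qed.

Section Derivations.
Context {Q In Out : Type} {rkIn : In -> nat} {rule : Q -> In -> rhs Q Out -> Prop}.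
Local Notation derives := (derives rkIn rule).

Lemma derives_ctx o l1 l2 {u u'} : derives u u' ->
  derives (Node (inl o) (l1 ++ u :: l2)) (Node (inl o) (l1 ++ u' :: l2)).
Proof.
elim=> [v v' uv|v|v v' v'' _ IH1 _ IH2].
- exact/rt_step/step_ctx.
- exact: rt_refl.
- exact: rt_trans IH1 IH2.
Qed.

Lemma derives_node {o cs cs'} : Forall2 derives cs cs' ->
  derives (Node (inl o) cs) (Node (inl o) cs').
Proof.
move=> dcs; suff /(_ [::]) : forall l1,
  derives (Node (inl o) (l1 ++ cs)) (Node (inl o) (l1 ++ cs')) by [].
elim: dcs => [|c c' cs1 cs1' dc _ IHcs] l1; first exact: rt_refl.
apply: rt_trans (derives_ctx o l1 cs1 dc) _.
by have := IHcs (rcons l1 c'); rewrite !cat_rcons.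
Qed.

Lemma step_node_inv {o cs v} : step rkIn rule (Node (inl o) cs) v ->
  exists l1 u u' l2, [/\ step rkIn rule u u', cs = l1 ++ u :: l2
                       & v = Node (inl o) (l1 ++ u' :: l2)].
Proof. by move=> st; inversion st; exists l1, u, u', l2. Qed.

Lemma derives_node_inv {o cs v} : derives (Node (inl o) cs) v ->
  exists2 cs', v = Node (inl o) cs' & Forall2 derives cs cs'.
Proof.
move=> /(clos_rt_rt1n _ _ _ _) uv; move En: (Node (inl o) cs) uv => u uv.
elim: uv cs En => [u'|u' u'' v' st _ IHuv] cs En; subst u'.
  by exists cs => //; elim: cs => [|c cs IHcs]; constructor => //; apply: rt_refl.
have [l1 [w [w' [l2 [ww' -> Eu'']]]]] := step_node_inv st.
have [cs' -> dcs'] := IHuv _ (esym Eu'').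
exists cs' => //; elim: l1 cs' dcs' {IHuv Eu''} => [|c l1 IHl1] cs' /= dcs'.
- by inversion dcs'; constructor=> //; apply: rt_trans (rt_step _ _ _ _ ww') _.
- by inversion dcs'; constructor=> //; apply: IHl1.
Qed.

Lemma produces_inv {q s t} : produces rkIn rule q s t ->
  exists a ss r, [/\ s = Node a ss, rule q a r, size ss = rkIn a
                   & derives (tsubst (inst Out ss (Node a ss)) r) (embed _ t)].
Proof.
move=> /(clos_rt_rt1n _ _ _ _) qst; inversion qst as [Et|u v st vt]; first by case: t {qst} Et.
inversion st; subst; exists a, ss, r; split=> //; exact: clos_rt1n_rt.
Qed.

Lemma derives_tsubst_leaves (B : eqType) (f : B -> sform Q In Out) r u :
  derives (tsubst f r) (embed _ u) ->
  forall b, b \in leaves r -> exists u', derives (f b) (embed _ u').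
Proof.
elim/tree_nested_ind: r u => [[o|b'] cs IHcs] [o' us] /=; last first.
  by move=> fb'u b; rewrite inE => /eqP->; exists (Node o' us).
move=> /derives_node_inv[_ [_ <-] dcs] b /mem_flatten_map[c c_in b_in].
have [_ /List.in_map_iff[u [<- _]] cu] := Forall2_In_l dcs (List.in_map _ _ _ c_in).
exact: IHcs c_in u cu b b_in.
Qed.

End Derivations.

Definition in_domains {Q : finType} {Delta Omega : Type} (rkD : Delta -> nat)
    (rule : Q -> Delta -> rhs Q Omega -> Prop) (S : {set Q}) (t : tree Delta) :=
  forall q, q \in S -> exists u : tree Omega, produces rkD rule q t u.

Lemma domain_rule_exists {Q : finType} {Delta Omega : Type} {rkD : Delta -> nat}
    {rule : Q -> Delta -> rhs Q Omega -> Prop} {S d ts} :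
  in_domains rkD rule S (Node d ts) ->
  exists Si : nat -> {set Q},
    domain_rules rkD rule S d
      (Node (inl d) [seq Node (inr (Si i, i)) [::] | i <- iota 0 (rkD d)])
    /\ forall j, in_domains rkD rule (Si j) (nth (Node d ts) ts j).
Proof.
move=> dom_S; case: (eqVneq S set0) => [->|S_neq0].
  by exists (fun=> set0); split=> [|j q]; [left | rewrite inE].
pose useful q g := rule q d g /\ exists u : tree Omega,
  derives rkD rule (tsubst (inst Omega ts (Node d ts)) g) (embed _ u).
have [g gP] : exists g : Q -> rhs Q Omega, forall q, q \in S -> useful q (g q).
  apply: (@fin_all_exists _ _ (fun q g => q \in S -> useful q g)) => q.
  case: (boolP (q \in S)) => [/dom_S[u /produces_inv[a [ss [r [[Ea Ess] qr _ ru]]]]] | _].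
  - by subst a ss; exists r => _; split=> //; exists u.
  - by exists (Node (inr (q, 0)) [::]).
pose Si i := [set q' | [exists q in S, (q', i) \in leaves (g q)]].
exists Si; split.
- right; split=> //; exists (fun q => [:: g q]), Si; split; [|split] => //.
  + by move=> q q_in; split=> // g' [<-|[]]; case: (gP q q_in).
  + move=> i q'; rewrite inE; split.
    * by case/exists_inP=> q q_in l_in; exists q; split=> //; exists (g q); split=> //; left.
    * by case=> q [q_in [g' [[<-|[]] l_in]]]; apply/exists_inP; exists q.
- move=> j q'; rewrite inE => /exists_inP[q q_in l_in].
  have [_ [u gu]] := gP q q_in.
  exact: derives_tsubst_leaves gu _ l_in.
Qed.

Section ProductWithDomainAutomaton.
Variables (Q1 Q2 : finType) (Sigma Delta Omega : Type)
  (rkS : Sigma -> nat) (rkD : Delta -> nat)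
  (rule1 : Q1 -> Sigma -> rhs Q1 Delta -> Prop)
  (rule2 : Q2 -> Delta -> rhs Q2 Omega -> Prop).

Local Notation dom_rules := (domain_rules rkD rule2).
Local Notation prod_rules := (product_rules rkD rule1 dom_rules).
Local Notation run_dom :=
  (derives (ext_rank rkD) (@ext_rules Q1 {set Q2} Delta Delta dom_rules)).

Lemma run_dom_node (c0 : rhs Q1 Delta) (z0 : rhs (Q1 * {set Q2}) Delta)
    {S d} {Si : nat -> {set Q2}} {cs zs} :
  dom_rules S d (Node (inl d) [seq Node (inr (Si i, i)) [::] | i <- iota 0 (rkD d)]) ->
  size cs = rkD d -> size zs = size cs ->
  (forall j, j < size cs ->
     run_dom (Node (inr (Si j, nth c0 cs j)) [::]) (unconv Delta (nth z0 zs j))) ->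
  run_dom (Node (inr (S, Node (inl d) cs)) [::]) (unconv Delta (Node (inl d) zs)).
Proof.
move=> Arule sz_cs sz_zs run_cs.
have st := step_root (rkIn := ext_rank rkD) (rule := ext_rules dom_rules) (a := inl d) Arule sz_cs.
apply: rt_trans (rt_step _ _ _ _ st) _.
apply/derives_node/(Forall2_nthP (Node (inl d) [::]) (Node (inl d) [::])).
rewrite -map_comp !size_map size_iota sz_zs sz_cs; split=> // j lt_j.
have lt_j_cs : j < size cs by rewrite sz_cs.
rewrite (nth_map 0) ?size_iota // nth_iota // add0n (nth_map z0) ?sz_zs //.
by move: (run_cs j lt_j_cs); rewrite (set_nth_default (Node (inl d) cs)).
Qed.

Section RightHandSide.
Context {a : Sigma} {ss : seq (tree Sigma)}.
Local Notation sub := (inst Delta ss (Node a ss)).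

Hypothesis product_children : forall i q t S, i < size ss ->
  produces rkS rule1 q (nth (Node a ss) ss i) t -> in_domains rkD rule2 S t ->
  produces rkS prod_rules (q, S) (nth (Node a ss) ss i) t.

Lemma rhs_product {xi t S} :
  wfb (rhs_ar rkD) xi -> all (fun b => b.2 < size ss) (leaves xi) ->
  derives rkS rule1 (tsubst sub xi) (embed _ t) -> in_domains rkD rule2 S t ->
  exists z, run_dom (Node (inr (S, xi)) [::]) (unconv Delta z)
            /\ derives rkS prod_rules (tsubst sub z) (embed _ t).
Proof.
elim/tree_nested_ind: xi t S => -[d|[q i]] cs IHcs [d' ts] S /=; last first.
  move=> /andP[/nilP-> _] /andP[lt_i _] qt dom_t.
  exists (Node (inr ((q, S), i)) [::]); split; first exact: rt_refl.
  exact: product_children i q (Node d' ts) S lt_i qt dom_t.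
move=> /andP[/eqP sz_cs wf_cs] lv_cs /derives_node_inv[_ [-> <-] dcs] dom_t.
have [Si [Arule dom_Si]] := domain_rule_exists dom_t.
pose c0 := Node (inl d) cs; pose z0 : rhs (Q1 * {set Q2}) Delta := Node (inl d) [::].
move/(Forall2_nthP (tsubst sub c0) (embed _ (Node d ts))): dcs.
rewrite !size_map => -[sz_ts dchildren].
pose P j z := run_dom (Node (inr (Si j, nth c0 cs j)) [::]) (unconv Delta z)
  /\ derives rkS prod_rules (tsubst sub z) (embed _ (nth (Node d ts) ts j)).
have [zs sz_zs zsP] : exists2 zs, size zs = size cs & forall j, j < size cs -> P j (nth z0 zs j).
  apply: seq_choice => j lt_j; rewrite /P.
  apply: (IHcs _ (In_nth c0 lt_j) _ _ _ _ _ (dom_Si j)).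
  - exact: (all_nthP c0 wf_cs).
  - move: lv_cs; rewrite all_flatten => /(all_nthP [::])/(_ j).
    by rewrite size_map (nth_map c0) //; apply.
  - by have := dchildren j lt_j; rewrite (nth_map c0) // (nth_map (Node d ts)) -?sz_ts.
exists (Node (inl d) zs); split.
- by apply: (run_dom_node c0 z0 Arule) => // j /zsP[].
- apply/derives_node/(Forall2_nthP (tsubst sub z0) (embed _ (Node d ts))).
  rewrite !size_map sz_zs sz_ts; split=> // j lt_j.
  have lt_j_cs : j < size cs by rewrite sz_ts.
  rewrite (nth_map z0) ?sz_zs // (nth_map (Node d ts)) //.
  exact: (zsP j lt_j_cs).2.
Qed.

End RightHandSide.

Theorem produces_product_domain : wf_rules rkS rkD rule1 ->
  forall s t q S, wfb rkS s -> produces rkS rule1 q s t ->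
  in_domains rkD rule2 S t -> produces rkS prod_rules (q, S) s t.
Proof.
move=> wf1 s; elim/tree_nested_ind: s => a ss IHss t q S /andP[/eqP sz_ss wf_ss].
move=> /produces_inv[_ [_ [xi [[<- <-] qxi _ dxi]]]] dom_t.
have /andP[wf_xi] := wf1 _ _ _ qxi; rewrite -sz_ss => lv_xi.
have IHchildren i q' t' S' : i < size ss ->
    produces rkS rule1 q' (nth (Node a ss) ss i) t' -> in_domains rkD rule2 S' t' ->
    produces rkS prod_rules (q', S') (nth (Node a ss) ss i) t'.
  by move=> lt_i; apply: IHss; [exact: In_nth | exact: (all_nthP _ wf_ss)].
have [z [run_xi dz]] := rhs_product IHchildren wf_xi lv_xi dxi dom_t.
apply: rt_trans (rt_step _ _ _ _ (step_root (q := (q, S)) _ sz_ss)) dz.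
by exists xi; split.
Qed.

End ProductWithDomainAutomaton.

Theorem lemma13 (Q1 Q2 : finType) (Sigma Delta Omega : Type)
  (rkS : Sigma -> nat) (rkD : Delta -> nat) (rkO : Omega -> nat)
  (R1 : seq (Q1 * Sigma * rhs Q1 Delta)) (R2 : seq (Q2 * Delta * rhs Q2 Omega)) :
  wf_rules rkS rkD (rules_of R1) ->
  wf_rules rkD rkO (rules_of R2) ->
  forall (s : tree Sigma) (t : tree Delta) (q1 : Q1) (S : {set Q2}),
    wfb rkS s ->
    produces rkS (rules_of R1) q1 s t ->
    (forall q, q \in S -> exists u : tree Omega, produces rkD (rules_of R2) q t u) ->
    produces rkS
      (product_rules rkD (rules_of R1) (domain_rules rkD (rules_of R2)))
      (q1, S) s t.
Proof. by move=> wf1 _; apply: produces_product_domain. Qed.
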